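(* Let $M$ be a helix hypersurface in $E^n$ with direction $d$, and let $\alpha: I\subset\mathbb{R}\to M$ be a unit speed (arc-length parametrized) curve on $M$ with Frenet frame $\{V_1(s),\dots,V_n(s)\}$. If $\alpha$ is a geodesic curve on $M$, then $d\in\mathrm{Sp}\{V_2'\}^\perp$ along $\alpha$, i.e. $\langle V_2'(s),d\rangle=0$ for all $s\in I$.
   Context: $\langle\cdot,\cdot\rangle$ is the standard inner product on $E^n=\mathbb{R}^n$. A hypersurface $M\subset\mathbb{R}^n$ with unit normal $N$ is a helix with respect to a fixed unit direction $d$ if the angle between $d$ and $T_qM$ is the same for all $q\in M$, equivalently $\langle d,N\rangle$ is constant on $M$. The Frenet frame of a unit speed curve with nonvanishing curvatures $k_i$ is the orthonormal frame $\{V_1=\alpha',V_2,\dots,V_n\}$ with $V_1'=k_1V_2$, $V_i'=-k_{i-1}V_{i-1}+k_iV_{i+1}$ ($1<i<n$), $V_n'=-k_{n-1}V_{n-1}$. A curve on $M$ is a geodesic if $\alpha''$ is normal to $M$. $\mathrm{Sp}\{v\}^\perp$ is the orthogonal complement of the span of $v$. *)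

From HB Require Import structures.
From mathcomp Require Import all_boot all_order all_algebra.
From mathcomp Require Import all_classical all_reals all_analysis.
Set Implicit Arguments. Unset Strict Implicit. Unset Printing Implicit Defensive.
Import Order.TTheory GRing.Theory Num.Theory.
Import numFieldNormedType.Exports.
Local Open Scope classical_set_scope.
Local Open Scope ring_scope.

Definition dot (R : realType) (n : nat) (u v : 'rV[R]_n) : R :=
  \sum_(i < n) u ord0 i * v ord0 i.

Definition tangent_vec (R : realType) (n : nat) (M : set 'rV[R]_n)
    (q v : 'rV[R]_n) : Prop :=
  exists (g : R -> 'rV[R]_n) (e : R),
    [/\ 0 < e, (forall t : R, `|t| < e -> M (g t)), g 0 = q,
        derivable g 0 1 & derive1 g 0 = v].

Definition hypersurface_with_normal (R : realType) (n : nat)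
    (M : set 'rV[R]_n) (N : 'rV[R]_n -> 'rV[R]_n) : Prop :=
  {within M, continuous N} /\
  forall q, M q ->
    dot (N q) (N q) = 1 /\
    (forall v, tangent_vec M q v <-> dot v (N q) = 0).

Definition helix (R : realType) (n : nat) (M : set 'rV[R]_n)
    (N : 'rV[R]_n -> 'rV[R]_n) (d : 'rV[R]_n) : Prop :=
  dot d d = 1 /\ exists c : R, forall q, M q -> dot d (N q) = c.

(* alpha is a unit speed curve on I with Frenet frame V_1..V_n and
   nonvanishing curvatures k_1..k_(n-1) (indices 1..n as in the paper) *)
Definition frenet_frame (R : realType) (n : nat) (I : set R)
    (alpha : R -> 'rV[R]_n) (V : nat -> R -> 'rV[R]_n) (k : nat -> R -> R)
    : Prop :=
  forall s, I s ->
  [/\ derivable alpha s 1,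
      dot (derive1 alpha s) (derive1 alpha s) = 1,
      V 1%N s = derive1 alpha s &
      (forall i j, (1 <= i <= n)%N -> (1 <= j <= n)%N ->
         dot (V i s) (V j s) = (i == j)%:R)] /\
  [/\ (forall i, (1 <= i <= n)%N -> derivable (V i) s 1),
      (forall i, (1 <= i <= n.-1)%N -> k i s != 0),
      derive1 (V 1%N) s = k 1%N s *: V 2%N s,
      (forall i, (1 < i < n)%N ->
         derive1 (V i) s = - (k i.-1 s *: V i.-1 s) + k i s *: V i.+1 s) &
      derive1 (V n) s = - (k n.-1 s *: V n.-1 s)].

Definition geodesic_on (R : realType) (n : nat) (M : set 'rV[R]_n)
    (I : set R) (alpha : R -> 'rV[R]_n) : Prop :=
  forall s, I s ->
    derivable (derive1 alpha) s 1 /\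
    forall v, tangent_vec M (alpha s) v ->
      dot (derive1 (derive1 alpha) s) v = 0.

From HB Require Import structures.
From mathcomp Require Import all_boot all_order all_algebra.
From mathcomp Require Import all_classical all_reals all_analysis.
Set Implicit Arguments. Unset Strict Implicit. Unset Printing Implicit Defensive.
Import Order.TTheory GRing.Theory Num.Theory.
Import numFieldNormedType.Exports.
Local Open Scope classical_set_scope.
Local Open Scope ring_scope.

(* Along a geodesic, alpha'' = k_1 V_2 is normal to M and k_1 <> 0, so V_2 is
   a unit normal vector: V_2 = +-N(alpha).  Hence <V_2, d> = +-<N, d> = +-c
   by the helix condition; being continuous, <V_2, d> is locally constant on
   the open set I, and its derivative <V_2', d> vanishes. *)

Section InnerProduct.
Variables (R : realType) (n : nat).
Implicit Types u v w : 'rV[R]_n.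

Lemma dotC u v : dot u v = dot v u.
Proof. by apply: eq_bigr => i _; rewrite mulrC. Qed.

Lemma dotDl u v w : dot (u + v) w = dot u w + dot v w.
Proof. by rewrite /dot -big_split; apply: eq_bigr => i _; rewrite mxE mulrDl. Qed.

Lemma dotZl a u w : dot (a *: u) w = a * dot u w.
Proof. by rewrite /dot mulr_sumr; apply: eq_bigr => i _; rewrite mxE mulrA. Qed.

Lemma dotBl u v w : dot (u - v) w = dot u w - dot v w.
Proof. by rewrite dotDl -scaleN1r dotZl mulN1r. Qed.

Lemma dotvv_eq0 u : dot u u = 0 -> u = 0.
Proof.
move=> /eqP; rewrite /dot psumr_eq0; last by move=> i _; rewrite -expr2 sqr_ge0.
move=> /allP u0; apply/matrixP => i j; rewrite (ord1 i) mxE.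
by have := u0 j (mem_index_enum _); rewrite implyTb mulf_eq0 orbb => /eqP.
Qed.

Lemma orthogonal_hyperplane_colinear u P :
  dot P P = 1 -> (forall w, dot w P = 0 -> dot u w = 0) ->
  u = dot u P *: P.
Proof.
move=> PP1 uperp; set p := dot u P.
have rP : dot (u - p *: P) P = 0 by rewrite dotBl dotZl PP1 mulr1 subrr.
apply/eqP; rewrite -subr_eq0; apply/eqP/dotvv_eq0.
by rewrite dotBl dotZl [dot P _]dotC rP mulr0 subr0 uperp.
Qed.

Lemma unit_colinear_coef_sqr u P :
  dot P P = 1 -> dot u u = 1 -> u = dot u P *: P -> dot u P ^+ 2 = 1.
Proof.
move=> PP1 <-; set p := dot u P => ->.
by rewrite dotZl dotC dotZl PP1 mulr1 expr2.
Qed.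

Definition dotr (d u : 'rV[R]_n) : R^o := dot u d.

Lemma dotr_continuous d : continuous (dotr d).
Proof.
apply: (@continuous_big _ _ +%R 0 xpredT add_continuous) => i _ u.
by apply: continuousM; [exact: coord_continuous | exact: cst_continuous].
Qed.

Lemma dotr_linear d : linear (dotr d).
Proof. by move=> a u v; rewrite /dotr dotDl dotZl. Qed.

HB.instance Definition _ d :=
  GRing.isLinear.Build R 'rV[R]_n R^o _ (dotr d) (dotr_linear d).

Lemma derive_dotr (f : R -> 'rV[R]_n) d s : derivable f s 1 ->
  'D_1 (fun t => dot (f t) d) s = dot ('D_1 f s) d.
Proof.
move=> /derivable1_diffP df.
have dd : differentiable (dotr d) (f s).
  by apply: linear_differentiable; exact: dotr_continuous.
rewrite (_ : (fun t => dot (f t) d) = dotr d \o f) //.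
rewrite deriveE; last exact: differentiable_comp.
by rewrite diff_comp // diff_lin /=; [rewrite -deriveE | exact: dotr_continuous].
Qed.

Lemma continuous_dotr (f : R -> 'rV[R]_n) d s : derivable f s 1 ->
  {for s, continuous (fun t => dot (f t) d)}.
Proof.
move=> /derivable1_diffP/differentiable_continuous fc.
change {for s, continuous (dotr d \o f)}.
exact: continuous_comp fc (@dotr_continuous d _).
Qed.

End InnerProduct.

(* Continuity rules out a jump between the two square roots +-g(s). *)
Lemma continuous_sqr_locally_constant (R : realType) (g : R -> R) s :
  {for s, continuous g} -> (\forall t \near s, g t ^+ 2 = g s ^+ 2) ->
  \forall t \near s, g t = g s.
Proof.
move=> gc gsq; have [gs0 | gsn0] := eqVneq (g s) 0.
  apply: filterS gsq => t; rewrite gs0 expr0n /= => /eqP.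
  by rewrite sqrf_eq0 => /eqP.
have gs_pos : 0 < `|g s| by rewrite normr_gt0.
move: gc => /cvgrPdist_lt /(_ _ gs_pos); apply: filter_app.
apply: filterS gsq => t /eqP.
rewrite -subr_eq0 subr_sqr mulf_eq0 subr_eq0 addr_eq0 => /orP[/eqP // | /eqP ->].
by rewrite opprK -mulr2n normrMn mulr2n gtrDl ltNge normr_ge0.
Qed.

Lemma geodesic_principal_normal_colinear (R : realType) (n : nat) (M : set 'rV[R]_n)
    (N : 'rV[R]_n -> 'rV[R]_n) (I : set R)
    (alpha : R -> 'rV[R]_n) (V : nat -> R -> 'rV[R]_n) (k : nat -> R -> R) s :
  (2 <= n)%N -> open I -> hypersurface_with_normal M N ->
  (forall t, I t -> M (alpha t)) ->
  frenet_frame I alpha V k -> geodesic_on M I alpha -> I s ->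
  exists2 p : R, p ^+ 2 = 1 & V 2%N s = p *: N (alpha s).
Proof.
move=> n2 oI [_ hN] aM fr geo Is.
have [[_ _ _ on] [_ k_neq0 dV1 _ _]] := fr s Is.
have [NN1 tangentE] := hN _ (aM s Is).
have k1_neq0 : k 1%N s != 0.
  by apply: k_neq0; rewrite /= -ltnS prednK //; apply: leq_trans n2.
have alpha''E : derive1 (derive1 alpha) s = k 1%N s *: V 2%N s.
  rewrite -dV1 !derive1E; apply: near_eq_derive.
  apply: filterS (open_nbhs_nbhs (conj oI Is)) => t It.
  by have [[_ _ -> _] _] := fr t It.
have V2perp w : dot w (N (alpha s)) = 0 -> dot (V 2%N s) w = 0.
  move=> /tangentE /(proj2 (geo s Is)) /eqP.
  by rewrite alpha''E dotZl mulf_eq0 (negbTE k1_neq0) => /eqP.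
have V2E := orthogonal_hyperplane_colinear NN1 V2perp.
by exists (dot (V 2%N s) (N (alpha s))) => //; apply: unit_colinear_coef_sqr; rewrite ?on.
Qed.

Theorem corollary3p2 (R : realType) (n : nat) (M : set 'rV[R]_n)
    (N : 'rV[R]_n -> 'rV[R]_n) (d : 'rV[R]_n) (I : set R)
    (alpha : R -> 'rV[R]_n) (V : nat -> R -> 'rV[R]_n) (k : nat -> R -> R) :
  (2 <= n)%N ->
  hypersurface_with_normal M N ->
  helix M N d ->
  open I -> is_interval I ->
  (forall s, I s -> M (alpha s)) ->
  frenet_frame I alpha V k ->
  geodesic_on M I alpha ->
  forall s, I s -> dot (derive1 (V 2%N) s) d = 0.
Proof.
move=> n2 hyp [_ [c helixc]] oI _ aM fr geo s Is.
set g := fun t => dot (V 2%N t) d.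
have gsq t : I t -> g t ^+ 2 = g s ^+ 2.
  suff gc u : I u -> g u ^+ 2 = c ^+ 2 by move=> It; rewrite !gc.
  move=> Iu; have [p p2 V2E] := geodesic_principal_normal_colinear n2 oI hyp aM fr geo Iu.
  by rewrite /g V2E dotZl dotC (helixc _ (aM u Iu)) exprMn p2 mul1r.
have [[_ _ _ _] [dV _ _ _ _]] := fr s Is.
have dV2 : derivable (V 2%N) s 1 by apply: dV; rewrite n2.
have g_const : \forall t \near s, g t = g s.
  apply: continuous_sqr_locally_constant; first exact: continuous_dotr dV2.
  apply: filterS (open_nbhs_nbhs (conj oI Is)) => t It; exact: gsq.
by rewrite derive1E -derive_dotr // (near_eq_derive _ g_const) derive_cst.
Qed.
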